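(* Let $C>0$, $c_{1,i}=\frac{\beta_i}{2C}$, $r=\sqrt{u^2+v^2}$, and for $i=1,2$ let $\varphi_{0,i}(u,v,z)=r^{p_i}z^{q_i}$ and $\varphi_{1,i}(u,v,z)=\frac{r^{p_i}z^{q_i}}{(C^{-2}+1)^{\beta_i/2}}\left|\frac{r}{v}\right|^{\beta_i}+c_{1,i}r^{p_i}z^{q_i}\left|\frac{r}{v}\right|^{\beta_i}\int_{u/|v|}^{1/C}(t^2+1)^{\frac{\alpha_i-\beta_i-1}{2}}\,dt.$ Then for all $C=C(h)>0$ sufficiently large, $\left(\partial_u\varphi_{0,i}-\partial_u\varphi_{1,i}\right)\le0$ at every point $(u,v,z)$ with $Cu=|v|$, $v\neq 0$, $0<z\le1$, $i=1,2$.
   Context: Fix $h\in(0,1)$ and $\alpha_h=\frac13+\frac23h$. Constants $p_i,q_i,\alpha_i,\beta_i$ ($i=1,2$) satisfy $p_1>0$, $p_2>0$, $q_1=0$, $q_2>0$, $0<\alpha_hp_i-(1-h)q_i=\beta_i<\alpha_i<1$, $q_2>\frac13p_2+\frac12\alpha_2$, $p_2>p_1$, $p_2+\frac32\alpha_2>p_1+\frac32\alpha_1$. *)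

From Stdlib Require Import Reals Lra.
From Coquelicot Require Import Coquelicot.
Open Scope R_scope.

Definition alpha_h (h : R) : R := 1/3 + 2/3 * h.

Definition rr (u v : R) : R := sqrt (u ^ 2 + v ^ 2).

(* phi_0(u,v,z) = r^p z^q  (real powers via Rpower, arguments positive where used) *)
Definition phi0 (p q u v z : R) : R := Rpower (rr u v) p * Rpower z q.

Definition c1 (C be : R) : R := be / (2 * C).

Definition phi1 (C p q al be u v z : R) : R :=
  Rpower (rr u v) p * Rpower z q / Rpower (/ C ^ 2 + 1) (be / 2)
    * Rpower (Rabs (rr u v / v)) be
  + c1 C be * Rpower (rr u v) p * Rpower z q * Rpower (Rabs (rr u v / v)) be
    * RInt (fun t => Rpower (t ^ 2 + 1) ((al - be - 1) / 2)) (u / Rabs v) (/ C).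

Definition du_diff_nonpos (C p q al be u v z : R) : Prop :=
  Derive (fun x => phi0 p q x v z) u - Derive (fun x => phi1 C p q al be x v z) u <= 0.

(* On the boundary [C u = |v|] the integral in [phi_1] vanishes and
   [|r/v|^beta = (C^-2 + 1)^(beta/2)], so [phi_1 = phi_0 F] with [F = 1] there.
   Hence [d_u phi_0 - d_u phi_1 = - phi_0 d_u F], and a direct computation gives
   [d_u F = beta/(C|v|) (1/T - T^((alpha-1)/2)/2)] with [T = C^-2 + 1].
   For [C >= 1] we have [1 <= T <= 2] and [alpha < 1], so [d_u F >= 0]. *)
From Pilot Require Import Defs.
From Stdlib Require Import Reals Lra.
From Coquelicot Require Import Coquelicot.
Open Scope R_scope.

Lemma Rpower_sqrt_l (y p : R) : 0 < y -> Rpower (sqrt y) p = Rpower y (p / 2).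
Proof.
  intros Hy. rewrite <- Rpower_sqrt, Rpower_mult by exact Hy. f_equal. field.
Qed.

Lemma Rabs_sqrt_div (y v : R) : 0 <= y -> v <> 0 -> Rabs (sqrt y / v) = sqrt (y / v ^ 2).
Proof.
  intros Hy Hv. assert (Hv2 : 0 < v ^ 2) by (apply pow2_gt_0; exact Hv).
  rewrite sqrt_div by assumption. rewrite <- pow2_abs, sqrt_pow2 by apply Rabs_pos.
  unfold Rdiv. rewrite Rabs_mult, Rabs_inv, (Rabs_pos_eq (sqrt y)) by apply sqrt_pos.
  reflexivity.
Qed.

Lemma Rpower_rr (u v p : R) : v <> 0 -> Rpower (rr u v) p = Rpower (u ^ 2 + v ^ 2) (p / 2).
Proof.
  intros Hv. assert (0 < v ^ 2) by (apply pow2_gt_0; exact Hv).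
  apply Rpower_sqrt_l. nra.
Qed.

Lemma Rpower_Rabs_rr_div (u v p : R) : v <> 0 ->
  Rpower (Rabs (rr u v / v)) p = Rpower ((u ^ 2 + v ^ 2) / v ^ 2) (p / 2).
Proof.
  intros Hv. assert (0 < v ^ 2) by (apply pow2_gt_0; exact Hv).
  unfold rr. rewrite Rabs_sqrt_div by (assumption || nra).
  apply Rpower_sqrt_l. apply Rdiv_lt_0_compat; nra.
Qed.

Lemma Rpower_pos (x y : R) : 0 < Rpower x y.
Proof. apply exp_pos. Qed.

Lemma Rpower_le_1 (x e : R) : 1 <= x -> e <= 0 -> Rpower x e <= 1.
Proof. intros Hx He. rewrite <- (Rpower_O x) by lra. apply Rle_Rpower; assumption. Qed.

Lemma is_derive_Rpower_comp (f : R -> R) (x df a : R) :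
  is_derive f x df -> 0 < f x ->
  is_derive (fun t => Rpower (f t) a) x (a * df / f x * Rpower (f x) a).
Proof.
  intros Hf Hpos.
  replace (a * df / f x * Rpower (f x) a) with (df * (a * Rpower (f x) (a - 1))).
  - apply (is_derive_comp (fun y => Rpower y a) f); [|exact Hf].
    apply is_derive_Reals, derivable_pt_lim_power, Hpos.
  - unfold Rminus. rewrite Rpower_plus, Rpower_Ropp, Rpower_1 by exact Hpos.
    field. lra.
Qed.

Lemma continuous_Rpower_sq_plus_1 (e t : R) : continuous (fun s => Rpower (s ^ 2 + 1) e) t.
Proof.
  apply (@ex_derive_continuous R_AbsRing R_NormedModule).
  unfold Rpower. auto_derive. nra.
Qed.

Lemma is_derive_RInt_scaled_lower (g : R -> R) (b c x : R) :
  (forall t, continuous g t) -> c <> 0 ->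
  is_derive (fun y => RInt g (y / c) b) x (- g (x / c) / c).
Proof.
  intros Hg Hc.
  replace (- g (x / c) / c) with (/ c * - g (x / c)) by (field; exact Hc).
  apply (is_derive_comp (fun a => RInt g a b) (fun y => y / c)).
  - apply (is_derive_RInt' g (fun a => RInt g a b) _ b); [|apply Hg].
    apply filter_forall. intros a. apply (@RInt_correct R_CompleteNormedModule).
    apply (@ex_RInt_continuous R_CompleteNormedModule). intros; apply Hg.
  - auto_derive; [exact I | field; exact Hc].
Qed.

Lemma Derive_sub_Derive_mult (f F : R -> R) (x : R) :
  ex_derive f x -> ex_derive F x -> F x = 1 ->
  Derive f x - Derive (fun y => f y * F y) x = - (f x * Derive F x).
Proof. intros Hf HF HF1. rewrite Derive_mult, HF1 by assumption. ring. Qed.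

Definition phi1_factor (C al be v x : R) : R :=
  Rpower (Rabs (rr x v / v)) be
  * (/ Rpower (/ C ^ 2 + 1) (be / 2)
     + Defs.c1 C be * RInt (fun t => Rpower (t ^ 2 + 1) ((al - be - 1) / 2)) (x / Rabs v) (/ C)).

Lemma phi1_eq_phi0_mult (C p q al be x v z : R) :
  phi1 C p q al be x v z = phi0 p q x v z * phi1_factor C al be v x.
Proof. unfold phi1, phi0, phi1_factor, Rdiv. ring. Qed.

Lemma ex_derive_phi0 (p q v z x : R) : v <> 0 -> ex_derive (fun y => phi0 p q y v z) x.
Proof.
  intros Hv. assert (0 < v ^ 2) by (apply pow2_gt_0; exact Hv).
  apply (ex_derive_ext (fun y => Rpower (y ^ 2 + v ^ 2) (p / 2) * Rpower z q)).
  - intros y. unfold phi0. rewrite Rpower_rr by exact Hv. reflexivity.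
  - unfold Rpower. auto_derive. nra.
Qed.

Section Boundary.

Variables (C al be v : R).
Hypotheses (HC : 0 < C) (Hv : v <> 0).

Let u0 := Rabs v / C.
Let T := / C ^ 2 + 1.

Lemma boundary_ratio : (u0 ^ 2 + v ^ 2) / v ^ 2 = T.
Proof.
  assert (0 < Rabs v) by (apply Rabs_pos_lt; exact Hv).
  unfold u0, T. rewrite <- (pow2_abs v). field. split; lra.
Qed.

Lemma phi1_factor_boundary : phi1_factor C al be v u0 = 1.
Proof.
  assert (0 < Rabs v) by (apply Rabs_pos_lt; exact Hv).
  unfold phi1_factor. rewrite Rpower_Rabs_rr_div, boundary_ratio by exact Hv.
  replace (u0 / Rabs v) with (/ C) by (unfold u0; field; lra).
  rewrite RInt_point. change zero with 0. rewrite Rmult_0_r, Rplus_0_r.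
  apply Rinv_r, Rgt_not_eq, Rpower_pos.
Qed.

Lemma is_derive_phi1_factor_boundary :
  is_derive (phi1_factor C al be v) u0
    (be / (C * Rabs v) * (/ T - Rpower T ((al - 1) / 2) / 2)).
Proof.
  set (g := fun t => Rpower (t ^ 2 + 1) ((al - be - 1) / 2)).
  set (P := Rpower T (be / 2)).
  assert (Habs : 0 < Rabs v) by (apply Rabs_pos_lt; exact Hv).
  assert (Hv2 : 0 < v ^ 2) by (apply pow2_gt_0; exact Hv).
  assert (HT : 0 < T) by (unfold T; assert (0 < / C ^ 2) by (apply Rinv_0_lt_compat; nra); lra).
  assert (Hu0 : u0 / Rabs v = / C) by (unfold u0; field; lra).
  assert (HB : is_derive (fun x => Rpower ((x ^ 2 + v ^ 2) / v ^ 2) (be / 2)) u0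
                 (be / 2 * (2 * u0 / v ^ 2) / T * P)).
  { unfold P. rewrite <- boundary_ratio at 1 2.
    apply (is_derive_Rpower_comp (fun x => (x ^ 2 + v ^ 2) / v ^ 2)).
    - auto_derive; [lra | field; lra].
    - rewrite boundary_ratio. exact HT. }
  assert (HI : is_derive (fun x => / P + Defs.c1 C be * RInt g (x / Rabs v) (/ C)) u0
                 (Defs.c1 C be * (- g (/ C) / Rabs v))).
  { replace (g (/ C)) with (g (u0 / Rabs v)) by (rewrite Hu0; reflexivity).
    rewrite <- (Rplus_0_l (Defs.c1 C be * _)).
    apply (is_derive_plus (fun _ => / P)); [exact (is_derive_const (/ P) u0)|].
    apply (is_derive_scal (fun x => RInt g (x / Rabs v) (/ C))).
    exact (is_derive_RInt_scaled_lower g (/ C) (Rabs v) u0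
             (fun t => continuous_Rpower_sq_plus_1 _ t) (Rgt_not_eq _ _ Habs)). }
  apply (is_derive_ext (fun x => Rpower ((x ^ 2 + v ^ 2) / v ^ 2) (be / 2)
                                 * (/ P + Defs.c1 C be * RInt g (x / Rabs v) (/ C)))).
  { intros x. unfold phi1_factor. rewrite Rpower_Rabs_rr_div by exact Hv. reflexivity. }
  assert (HPg : P * g (/ C) = Rpower T ((al - 1) / 2)).
  { unfold P, g. replace ((/ C) ^ 2 + 1) with T by (unfold T; field; lra).
    rewrite <- Rpower_plus. f_equal. field. }
  replace (be / (C * Rabs v) * (/ T - Rpower T ((al - 1) / 2) / 2))
    with (be / 2 * (2 * u0 / v ^ 2) / T * P * (/ P + Defs.c1 C be * RInt g (u0 / Rabs v) (/ C))
          + Rpower ((u0 ^ 2 + v ^ 2) / v ^ 2) (be / 2) * (Defs.c1 C be * (- g (/ C) / Rabs v))).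
  - apply (is_derive_mult _ _ _ _ _ HB HI). intros; apply Rmult_comm.
  - rewrite boundary_ratio, Hu0, RInt_point. change zero with 0. fold P.
    rewrite <- HPg. unfold u0, Defs.c1. rewrite <- (pow2_abs v).
    assert (0 < P) by apply Rpower_pos. field. repeat split; lra.
Qed.

Lemma boundary_derivative_nonneg :
  1 <= C -> 0 < be -> al < 1 -> 0 <= be / (C * Rabs v) * (/ T - Rpower T ((al - 1) / 2) / 2).
Proof.
  intros HC1 Hbe Hal.
  assert (Habs : 0 < Rabs v) by (apply Rabs_pos_lt; exact Hv).
  assert (HT : 1 <= T <= 2).
  { unfold T. assert (0 < / C ^ 2) by (apply Rinv_0_lt_compat; nra).
    assert (/ C ^ 2 <= 1) by (rewrite <- Rinv_1; apply Rinv_le_contravar; nra). lra. }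
  assert (Hpow : Rpower T ((al - 1) / 2) <= 1) by (apply Rpower_le_1; lra).
  assert (Hinv : / 2 <= / T) by (apply Rinv_le_contravar; lra).
  apply Rmult_le_pos; [apply Rlt_le, Rdiv_lt_0_compat; nra | lra].
Qed.

Lemma du_diff_nonpos_boundary (p q z : R) :
  1 <= C -> 0 < be -> al < 1 -> du_diff_nonpos C p q al be u0 v z.
Proof.
  intros HC1 Hbe Hal. unfold du_diff_nonpos.
  rewrite (Derive_ext (fun x => phi1 C p q al be x v z) (fun x => phi0 p q x v z * phi1_factor C al be v x))
    by (intros; apply phi1_eq_phi0_mult).
  rewrite Derive_sub_Derive_mult;
    [| apply ex_derive_phi0, Hv
     | eexists; apply is_derive_phi1_factor_boundary
     | apply phi1_factor_boundary].
  rewrite (is_derive_unique _ _ _ is_derive_phi1_factor_boundary).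
  assert (0 < phi0 p q u0 v z) by (apply Rmult_lt_0_compat; apply Rpower_pos).
  pose proof (boundary_derivative_nonneg HC1 Hbe Hal). nra.
Qed.

End Boundary.

Theorem lemma7p1 (h p1 p2 q1 q2 a1 a2 b1 b2 : R) :
  0 < h < 1 ->
  0 < p1 -> 0 < p2 -> q1 = 0 -> 0 < q2 ->
  0 < alpha_h h * p1 - (1 - h) * q1 ->
  alpha_h h * p1 - (1 - h) * q1 = b1 -> b1 < a1 -> a1 < 1 ->
  0 < alpha_h h * p2 - (1 - h) * q2 ->
  alpha_h h * p2 - (1 - h) * q2 = b2 -> b2 < a2 -> a2 < 1 ->
  q2 > 1/3 * p2 + 1/2 * a2 ->
  p2 > p1 ->
  p2 + 3/2 * a2 > p1 + 3/2 * a1 ->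
  exists C0 : R, 0 < C0 /\
    forall C : R, C0 <= C ->
    forall u v z : R, C * u = Rabs v -> v <> 0 -> 0 < z <= 1 ->
      du_diff_nonpos C p1 q1 a1 b1 u v z /\
      du_diff_nonpos C p2 q2 a2 b2 u v z.
Proof.
  intros _ _ _ _ _ Hb1_pos Hb1 _ Ha1 Hb2_pos Hb2 _ Ha2 _ _ _.
  rewrite Hb1 in Hb1_pos. rewrite Hb2 in Hb2_pos.
  exists 1. split; [lra|].
  intros C HC u v z Hu Hv _.
  replace u with (Rabs v / C) by (rewrite <- Hu; field; lra).
  split; apply du_diff_nonpos_boundary; (assumption || lra).
Qed.
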